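(* $f_3(6,5)=4=\rho_3(T(8,4))$, where $T(8,4)$ is the complete $4$-partite graph with all parts of size $2$.
   Context: $\mathcal{G}(\Delta,\omega)$ denotes the class of finite simple graphs $G$ with maximum degree $\Delta(G)\le\Delta$ and clique number $\omega(G)\le\omega$. $k_t(G)$ is the number of copies of $K_t$ in $G$ and $\rho_t(G)=k_t(G)/|V(G)|$. $f_t(\Delta,\omega)=\sup\{\rho_t(G): G\in\mathcal{G}(\Delta,\omega),\ |V(G)|\ge 1\}$. *)

From HB Require Import structures.
From mathcomp Require Import all_boot all_order all_algebra.
Set Implicit Arguments. Unset Strict Implicit. Unset Printing Implicit Defensive.
Import Order.TTheory GRing.Theory Num.Theory.

Definition simple_graph (T : finType) (e : rel T) : Prop :=
  symmetric e /\ irreflexive e.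

Definition is_clique (T : finType) (e : rel T) (S : {set T}) : bool :=
  [forall x in S, forall y in S, (x != y) ==> e x y].

Definition max_deg_le (T : finType) (e : rel T) (D : nat) : Prop :=
  forall x : T, #|[set y | e x y]| <= D.

Definition clique_num_le (T : finType) (e : rel T) (w : nat) : Prop :=
  forall S : {set T}, is_clique e S -> #|S| <= w.

Definition k_t (T : finType) (e : rel T) (t : nat) : nat :=
  #|[set S : {set T} | is_clique e S && (#|S| == t)]|.

Definition rho_t (T : finType) (e : rel T) (t : nat) : rat :=
  (k_t e t)%:R / #|T|%:R.

Definition in_class (T : finType) (e : rel T) (D w : nat) : Prop :=
  simple_graph e /\ max_deg_le e D /\ clique_num_le e w /\ 0 < #|T|.

Definition is_f_t (t D w : nat) (r : rat) : Prop :=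
  (forall (T : finType) (e : rel T), in_class e D w -> (rho_t e t <= r)%R) /\
  (forall r' : rat,
     (forall (T : finType) (e : rel T), in_class e D w -> (rho_t e t <= r')%R) ->
     (r <= r')%R).

(* T(8,4): complete 4-partite graph with parts {0,1},{2,3},{4,5},{6,7}. *)
Definition T84_rel : rel 'I_8 := fun x y => (val x %/ 2 != val y %/ 2)%N.

(* Write t(v) for the number of triangles through v, so that the sum of t(v)
   over all vertices is 3 k_3(G). In N(v), 2 t(v) plus the number of ordered
   non-adjacent pairs equals d(d-1) <= 30. Since N(v) minus any vertex,
   together with v, is not a 6-clique, the non-adjacent pairs of N(v) do not
   all share a vertex; hence t(v) <= 13, with equality only when N(v) has
   exactly two non-edges xy and zw, and they are disjoint. The two remaining
   neighbours g of such a v then satisfy N[g] = N[v], from which t <= 11 at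
   x, y, z and w. Discharging: every vertex with t = 13 sends 1/4 to each of
   its (at least four) neighbours with t <= 11, and such a neighbour x
   receives at most 4 * 1/4, since its neighbours z and w do not have t = 13.
   Every vertex ends with charge at most 12, so k_3(G) <= 4 |V(G)|. In
   T(8,4) every vertex lies in 12 triangles, which gives equality. *)

From mathcomp Require Import all_boot all_order all_algebra zify.
Set Implicit Arguments. Unset Strict Implicit. Unset Printing Implicit Defensive.
Import GRing.Theory Num.Theory.

Lemma card_sum_indicator (X : finType) (A : {pred X}) : #|A| = \sum_x (x \in A : nat).
Proof. by rewrite -sum1_card big_mkcond; apply: eq_bigr => x _; case: (x \in A). Qed.

Lemma cards3 (T : finType) (x y z : T) :
  x != y -> x != z -> y != z -> #|[set x; y; z]| = 3.
Proof.
move=> xy xz yz; have /card_uniqP/= <- : uniq [:: x; y; z].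
  by rewrite /= !inE negb_or xy xz yz.
by apply: eq_card => w; rewrite !inE orbA.
Qed.

Lemma sum_card_exchange (I J : finType) (A : {pred I}) (B : I -> {pred J}) :
  \sum_(i in A) #|B i| = \sum_j #|[set i in A | j \in B i]|.
Proof.
transitivity (\sum_i \sum_j ((i \in A) && (j \in B i) : nat)).
  rewrite big_mkcond; apply: eq_bigr => i _.
  by case: (i \in A); rewrite ?card_sum_indicator // big1.
rewrite exchange_big; apply: eq_bigr => j _.
by rewrite card_sum_indicator; apply: eq_bigr => i _; rewrite inE; case: (i \in A).
Qed.

Section Triangles.
Variables (T : finType) (e : rel T).
Hypotheses (e_sym : symmetric e) (e_irr : irreflexive e).

Definition nbhd u := [set x | e u x].

Definition triangles_at u := [set S : {set T} | [&& is_clique e S, #|S| == 3 & u \in S]].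

Definition ntri u := #|triangles_at u|.

Definition nonadj u :=
  [set p : T * T | [&& p.1 \in nbhd u, p.2 \in nbhd u, p.1 != p.2 & ~~ e p.1 p.2]].

Lemma in_triangles_at u S :
  (S \in triangles_at u) = [&& is_clique e S, #|S| == 3 & u \in S].
Proof. by rewrite inE. Qed.

Lemma in_nbhd u v : (v \in nbhd u) = e u v.
Proof. by rewrite inE. Qed.

Lemma in_nonadj u x y :
  ((x, y) \in nonadj u) = [&& x \in nbhd u, y \in nbhd u, x != y & ~~ e x y].
Proof. by rewrite inE. Qed.

Lemma nbhd_sym u v : (u \in nbhd v) = (v \in nbhd u).
Proof. by rewrite !inE e_sym. Qed.

Lemma nbhd_neq u v : u \in nbhd v -> u != v.
Proof. by rewrite inE; apply: contraTneq => ->; rewrite e_irr. Qed.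

Lemma cliqueP (S : {set T}) :
  reflect {in S &, forall x y, x != y -> e x y} (is_clique e S).
Proof.
apply: (iffP forallP) => [H x y xS yS | H x].
  by move: (H x) => /implyP/(_ xS)/forall_inP/(_ y yS)/implyP.
by apply/implyP => xS; apply/forall_inP => y yS; apply/implyP; apply: H.
Qed.

Lemma sum_ntri : \sum_u ntri u = 3 * k_t e 3.
Proof.
rewrite sum_card_exchange /k_t card_sum_indicator big_distrr /=.
apply: eq_bigr => S _; rewrite inE.
have [/andP [cS /eqP S3]|nS] := boolP (is_clique e S && (#|S| == 3)); last first.
  by rewrite muln0; apply: eq_card0 => u; rewrite !inE andbA (negbTE nS).
by rewrite /= muln1 -S3; apply: eq_card => u; rewrite !inE cS S3.
Qed.

Lemma triangles_at_edge u a : e u a ->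
  [set S in triangles_at u | a \in S :\ u] = [set [set u; a; b] | b in nbhd u :&: nbhd a].
Proof.
move=> eua; have au : a != u by apply: contraTneq eua => ->; rewrite e_irr.
apply/setP => S; rewrite !inE; apply/idP/imsetP.
  case/and3P=> /and3P [cS /eqP S3 uS] au' aS.
  have aSu : a \in S :\ u by rewrite in_setD1 au' aS.
  have /cards1P [b Sb] : #|S :\ u :\ a| == 1.
    by move: S3; rewrite (cardsD1 u) uS (cardsD1 a (S :\ u)) aSu; lia.
  have : b \in S :\ u :\ a by rewrite Sb set11.
  rewrite !inE => /and3P [ba bu bS].
  exists b; first by rewrite !inE !(cliqueP _ cS) // eq_sym.
  apply/eqP; rewrite eq_sym eqEcard S3 cards3 1?eq_sym // leqnn andbT.
  by apply/subsetP => x; rewrite !inE -orbA => /or3P [] /eqP ->.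
case=> b; rewrite !inE => /andP [eub eab] ->.
have bu : b != u by apply: contraTneq eub => ->; rewrite e_irr.
have ba : b != a by apply: contraTneq eab => ->; rewrite e_irr.
rewrite cards3 1?eq_sym // !inE !eqxx !orbT /= eq_sym au !andbT.
apply/cliqueP => x y; rewrite !inE -!orbA => Hx Hy.
by case/or3P: Hx => /eqP ->; case/or3P: Hy => /eqP -> //; rewrite ?eqxx // e_sym.
Qed.

Lemma double_ntri u : 2 * ntri u = \sum_(a in nbhd u) #|nbhd u :&: nbhd a|.
Proof.
have -> : 2 * ntri u = \sum_(S in triangles_at u) #|S :\ u|.
  rewrite mulnC -sum_nat_const; apply: eq_bigr => S.
  by rewrite in_triangles_at => /and3P [_ /eqP S3 uS]; move: S3; rewrite (cardsD1 u) uS => -[].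
rewrite sum_card_exchange [RHS]big_mkcond; apply: eq_bigr => a _.
case: ifP => [/[!inE] eua | nua].
  rewrite (triangles_at_edge eua) card_in_imset // => b b'.
  rewrite !inE => /andP [eub eab] _ Ebb'.
  have : b \in [set u; a; b'] by rewrite -Ebb' !inE eqxx !orbT.
  by rewrite !inE -orbA => /or3P [] /eqP // Eb; move: eub eab; rewrite Eb e_irr.
apply: eq_card0 => S; rewrite !inE.
apply/negP => /andP [/and3P [cS _ uS] /andP [au aS]].
by rewrite inE (cliqueP _ cS) // eq_sym in nua.
Qed.

Lemma card_nonadj u : #|nonadj u| = \sum_(a in nbhd u) #|nbhd u :\ a :\: nbhd a|.
Proof.
pose Q a b := [&& a \in nbhd u, b \in nbhd u, a != b & ~~ e a b].
rewrite card_sum_indicator (eq_bigr (fun p => Q p.1 p.2 : nat)); last by move=> p _; rewrite inE.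
rewrite -(pair_bigA _ (fun a b => Q a b : nat)) [RHS]big_mkcond /=; apply: eq_bigr => a _.
have [aN|aN] := boolP (a \in nbhd u); last by rewrite big1 // => b _; rewrite /Q (negbTE aN).
rewrite card_sum_indicator; apply: eq_bigr => b _; rewrite /Q aN !inE eq_sym.
by case: (e u b); case: (b != a); case: (e a b).
Qed.

Lemma ntri_nonadj u : 2 * ntri u + #|nonadj u| = #|nbhd u| * (#|nbhd u|).-1.
Proof.
rewrite double_ntri card_nonadj -big_split /= -sum_nat_const.
apply: eq_bigr => a aN.
have -> : nbhd u :&: nbhd a = (nbhd u :\ a) :&: nbhd a.
  by apply/setP => x; rewrite !inE; case: eqP => // ->; rewrite e_irr andbF.
by rewrite cardsID (cardsD1 a (nbhd u)) aN.
Qed.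

Lemma card_setU1D1_nbhd u g : g \in nbhd u -> #|u |: (nbhd u :\ g)| = #|nbhd u|.
Proof. by move=> gN; rewrite cardsU1 !inE e_irr andbF (cardsD1 g (nbhd u)) gN. Qed.

Lemma nonadjC u x y : ((x, y) \in nonadj u) = ((y, x) \in nonadj u).
Proof. by rewrite !in_nonadj e_sym eq_sym andbCA. Qed.

End Triangles.

Ltac rewrite_neqs := repeat match goal with
  | H : is_true (?a != ?b) |- context [?a == ?b] => rewrite (negbTE H)
  | H : is_true (?a != ?b) |- context [?b == ?a] => rewrite (eq_sym b a) (negbTE H)
  end.

Ltac decide_by_neqs :=
  rewrite /= !inE ?xpair_eqE; rewrite_neqs; rewrite ?eqxx /= ?andbF ?andFb ?orbF ?orFb.

Section MaxDegree6CliqueNumber5.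
Variables (T : finType) (e : rel T).
Hypotheses (e_sym : symmetric e) (e_irr : irreflexive e).
Hypothesis deg_le6 : forall u, #|nbhd e u| <= 6.
Hypothesis clique_le5 : clique_num_le e 5.

Local Notation N := (nbhd e).
Local Notation ntri := (ntri e).
Local Notation nonadj := (nonadj e).

Lemma nonadj_avoiding u a : #|N u| = 6 ->
  exists x y, [/\ (x, y) \in nonadj u, x != a & y != a].
Proof.
move=> d6; have [/exists_inP [[x y] xyQ /andP [xa ya]] | noQ] :=
  boolP [exists p in nonadj u, (p.1 != a) && (p.2 != a)]; first by exists x, y.
have : is_clique e (u |: (N u :\ a)).
  apply/cliqueP => x y; rewrite !inE.
  case/predU1P => [-> | /andP [xa ux]]; case/predU1P => [-> | /andP [ya uy]] //;
    rewrite ?eqxx // => xy; first by rewrite e_sym.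
  apply: contraNT noQ => nxy; apply/exists_inP; exists (x, y); last by rewrite xa ya.
  by rewrite in_nonadj !inE ux uy xy nxy.
move/clique_le5; rewrite cardsU1 !inE e_irr andbF /=.
by have := cardsD1 a (N u); rewrite d6; case: (a \in N u) => /=; lia.
Qed.

Lemma ntri_le10 u : #|N u| <= 5 -> ntri u <= 10.
Proof.
have := ntri_nonadj e_sym e_irr u.
case: #|N u| => [|[|[|[|[|[|d]]]]]] //=; lia.
Qed.

Lemma nonadj_ge4 u : #|N u| = 6 -> 4 <= #|nonadj u|.
Proof.
move=> d6; have [a aN] : exists a, a \in N u by apply/set0Pn; rewrite -card_gt0 d6.
have [x [y [xyQ _ _]]] := nonadj_avoiding a d6.
have [z [w [zwQ zx wx]]] := nonadj_avoiding x d6.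
have xy : x != y by move: xyQ; rewrite in_nonadj => /and4P [].
have zw : z != w by move: zwQ; rewrite in_nonadj => /and4P [].
have /card_uniqP/= <- : uniq [:: (x, y); (y, x); (z, w); (w, z)] by decide_by_neqs.
apply/subset_leq_card/subsetP => p; rewrite !in_cons in_nil orbF => /or4P [] /eqP ->;
  by [| rewrite (nonadjC e_sym)].
Qed.

Lemma deg_eq6 u : 10 < ntri u -> #|N u| = 6.
Proof.
move=> t10; apply/eqP; rewrite eqn_leq deg_le6 ltnNge.
by apply: contraL t10 => /ntri_le10; rewrite -leqNgt.
Qed.

Lemma ntri_le13 u : ntri u <= 13.
Proof.
have [|/deg_eq6 d6] := leqP (ntri u) 10; first by move/leq_trans; apply.
by have := ntri_nonadj e_sym e_irr u; have := nonadj_ge4 d6; rewrite d6; lia.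
Qed.

Definition pairing (x y z w : T) := [:: (x, y); (y, x); (z, w); (w, z)].

(* The shape of the neighbourhood of a vertex lying in 13 triangles (see
   [frame_of_ntri13]): six neighbours whose only non-adjacent pairs are the
   disjoint pairs [x, y] and [z, w]. *)
Definition frame u x y z w :=
  [/\ #|N u| = 6, uniq [:: x; y; z; w] & nonadj u =i pairing x y z w].

Lemma frame_of_ntri13 u : ntri u = 13 -> exists x y z w, frame u x y z w.
Proof.
move=> t13; have d6 : #|N u| = 6 by apply: deg_eq6; rewrite t13.
have q4 : #|nonadj u| = 4.
  by have := ntri_nonadj e_sym e_irr u; rewrite t13 d6; lia.
have [a aN] : exists a, a \in N u by apply/set0Pn; rewrite -card_gt0 d6.
have [x [y [xyQ _ _]]] := nonadj_avoiding a d6.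
have [z [w [zwQ zx wx]]] := nonadj_avoiding x d6.
have xy : x != y by move: xyQ; rewrite in_nonadj => /and4P [].
have zw : z != w by move: zwQ; rewrite in_nonadj => /and4P [].
have Qxyzw : nonadj u =i pairing x y z w.
  have uniq_p : uniq (pairing x y z w) by decide_by_neqs.
  have card_p : #|pairing x y z w| = #|nonadj u| by rewrite (card_uniqP uniq_p) q4.
  suff /(subset_cardP card_p) E : pairing x y z w \subset nonadj u by move=> p; rewrite E.
  apply/subsetP => p; rewrite /pairing !in_cons in_nil orbF => /or4P [] /eqP ->;
    by [| rewrite (nonadjC e_sym)].
have [p1 [p2 [pQ p1y p2y]]] := nonadj_avoiding y d6.
exists x, y, z, w; split=> //.
move: pQ; rewrite Qxyzw /pairing !in_cons in_nil orbF !xpair_eqE.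
by case/or4P => /andP [/eqP E1 /eqP E2]; subst p1 p2; rewrite ?eqxx in p1y p2y;
  decide_by_neqs.
Qed.

Lemma frame_sym_xy u x y z w : frame u x y z w -> frame u y x z w.
Proof.
case=> d6 uq Q; split=> //.
  by rewrite (perm_uniq (s2 := [:: x; y; z; w])) //; apply/permP => q /=; rewrite addnCA.
move=> p; rewrite Q /pairing !in_cons.
by case: (p == (x, y)); case: (p == (y, x)).
Qed.

Lemma frame_sym_pairs u x y z w : frame u x y z w -> frame u z w x y.
Proof.
case=> d6 uq Q; split=> //.
  by rewrite (perm_uniq (s2 := [:: x; y; z; w])) //; apply/permP => q /=; lia.
move=> p; rewrite Q /pairing !in_cons in_nil.
by case: (p == (x, y)); case: (p == (y, x)); case: (p == (z, w)); case: (p == (w, z)).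
Qed.

Lemma frame_nonadj u x y z w : frame u x y z w ->
  [/\ x \in N u, y \in N u, x != y & ~~ e x y].
Proof. by case=> _ _ Q; apply/and4P; rewrite -in_nonadj Q mem_head. Qed.

Lemma frame_adj u x y z w a b : frame u x y z w ->
  a \in N u -> b \in N u -> a != b -> (a, b) \notin pairing x y z w -> e a b.
Proof. by case=> _ _ Q aN bN ab; rewrite -Q in_nonadj aN bN ab /= negbK. Qed.

Section Frame.
Variables u x y z w : T.
Hypothesis Hframe : frame u x y z w.

Lemma frame_nbhd_other g : g \in N u -> g \notin [:: x; y; z; w] -> N g = u |: (N u :\ g).
Proof.
move=> gN gxyzw; have [d6 _ _] := Hframe.
have sub : u |: (N u :\ g) \subset N g.
  apply/subsetP => b; rewrite !inE => /predU1P [-> | /andP [bg ub]].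
    by rewrite e_sym; move: gN; rewrite inE.
  have gb_pairing : (g, b) \notin pairing x y z w.
    move: gxyzw; rewrite /pairing !inE ?xpair_eqE.
    by case: (g == x); case: (g == y); case: (g == z); case: (g == w); rewrite ?andbF.
  by apply: (frame_adj Hframe); rewrite // ?inE // eq_sym.
by apply/eqP; rewrite eq_sym eqEcard sub card_setU1D1_nbhd // d6 deg_le6.
Qed.

Lemma frame_ntri_other g : g \in N u -> g \notin [:: x; y; z; w] -> ntri g = 13.
Proof.
move=> gN gxyzw; have [d6 _ Q] := Hframe; have Ng := frame_nbhd_other gN gxyzw.
have Qg_le4 : #|nonadj g| <= 4.
  apply: leq_trans (card_size (pairing x y z w)); apply/subset_leq_card/subsetP => -[a b].
  rewrite -Q !in_nonadj Ng !inE.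
  case/and4P => /predU1P [-> | /andP [ag ua]] /predU1P [-> | /andP [bg ub]] ab nab.
  - by rewrite eqxx in ab.
  - by rewrite ub in nab.
  - by rewrite e_sym ua in nab.
  - by rewrite ua ub ab nab.
have := ntri_nonadj e_sym e_irr g; have := ntri_le13 g.
by rewrite Ng card_setU1D1_nbhd // d6; lia.
Qed.

Lemma frame_other_nbhd g : g \in N u -> g \notin [:: x; y; z; w] -> x \in N g.
Proof.
move=> gN gX; rewrite (frame_nbhd_other gN gX) in_setU1 in_setD1.
have [xN _ _ _] := frame_nonadj Hframe.
by move: gX; rewrite in_cons negb_or eq_sym xN => /andP [-> _]; rewrite orbT.
Qed.

Lemma frame_other_nonadj g v : g \in N u -> g \notin [:: x; y; z; w] ->
  v \notin u |: N u -> ~~ e g v.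
Proof.
move=> gN gX; rewrite -in_nbhd (frame_nbhd_other gN gX); apply: contra.
by rewrite !in_setU1 in_setD1 => /predU1P [-> | /andP [_ ->]]; rewrite ?eqxx ?orbT.
Qed.

Lemma frame_cross_nbhd : z \in N x /\ w \in N x.
Proof.
have [_ uq _] := Hframe; have [xN _ _ _] := frame_nonadj Hframe.
have [zN wN _ _] := frame_nonadj (frame_sym_pairs Hframe).
move: uq; rewrite /= !inE !negb_or => /and4P [/and3P [_ xz xw] /andP [yz yw] _ _].
by split; apply: (frame_adj Hframe xN) => //; decide_by_neqs.
Qed.

Lemma frame_outside_nbr : #|N x| = 6 -> exists2 p, p \in N x & p \notin u |: N u.
Proof.
move=> dx6; have [d6 _ _] := Hframe.
have [xN yN _ nxy] := frame_nonadj Hframe.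
have [sub | /subsetPn [p pNx pNu]] := boolP (N x \subset u |: N u); last by exists p.
have /subset_leq_card : N x \subset (u |: N u) :\ x :\ y.
  apply/subsetP => v vNx; rewrite !in_setD1 (subsetP sub v vNx) (nbhd_neq e_irr vNx) !andbT.
  by apply: (contraNneq _ nxy) => vy; move: vNx; rewrite vy inE.
have yx : y != x by have [] := frame_nonadj Hframe; rewrite eq_sym.
have xU : x \in u |: N u by rewrite setU1r.
have yUx : y \in (u |: N u) :\ x by rewrite in_setD1 yx setU1r.
have := cardsD1 x (u |: N u); have := cardsD1 y ((u |: N u) :\ x).
rewrite dx6 xU yUx cardsU1 d6 inE e_irr; lia.
Qed.

Lemma frame_others :
  exists g1 g2, g1 != g2 /\ N u :\: [set v in [:: x; y; z; w]] = [set g1; g2].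
Proof.
have [d6 uq _] := Hframe; apply/cards2P.
have [xN yN _ _] := frame_nonadj Hframe.
have [zN wN _ _] := frame_nonadj (frame_sym_pairs Hframe).
have sub : [set v in [:: x; y; z; w]] \subset N u.
  by apply/subsetP => v; rewrite inE !in_cons in_nil orbF => /or4P [] /eqP ->.
have := cardsID [set v in [:: x; y; z; w]] (N u).
by rewrite (setIidPr sub) cardsE (card_uniqP uq) d6 => -[<-].
Qed.

Lemma frame_nonadj_ge8 : #|N x| = 6 -> 8 <= #|nonadj x|.
Proof.
move=> dx6; have [xN yN xy nxy] := frame_nonadj Hframe.
have [zN wN zw nzw] := frame_nonadj (frame_sym_pairs Hframe).
have [p pNx pU] := frame_outside_nbr dx6.
(* [p] lies outside N[u] = N[g1] = N[g2], hence is adjacent to none of u, g1, g2,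
   which all lie in N(x) together with the non-adjacent pair z, w. *)
have [g1 [g2 [g12 G]]] := frame_others.
have p_neq v : v \in u |: N u -> p != v by move=> vU; apply: contraNneq pU => ->.
have gP g : g \in [set g1; g2] -> g \in N u /\ g \notin [:: x; y; z; w].
  by rewrite -G in_setD inE => /andP [].
have [g1N g1X] := gP g1 (set21 _ _); have [g2N g2X] := gP g2 (set22 _ _).
have [g1Nx g2Nx] : g1 \in N x /\ g2 \in N x by rewrite !(nbhd_sym e_sym _ x) !frame_other_nbhd.
have [npg1 npg2] : ~~ e p g1 /\ ~~ e p g2 by rewrite !(e_sym p) !frame_other_nonadj.
have [ug1 ug2] : u != g1 /\ u != g2 by rewrite ![u == _]eq_sym !(nbhd_neq e_irr).
have [pg1 pg2] : p != g1 /\ p != g2 by rewrite !p_neq // setU1r.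
move: g1X g2X; rewrite !in_cons in_nil !negb_or => /and4P [_ _ g1z g1w] /and4P [_ _ g2z g2w].
have [exz exw] := frame_cross_nbhd.
have uNx : u \in N x by rewrite nbhd_sym.
move: (pU); rewrite in_setU1 negb_or in_nbhd e_sym => /andP [pu npu].
have [pz pw] : p != z /\ p != w by rewrite !p_neq // setU1r.
have [uz uw] : u != z /\ u != w by rewrite ![u == _]eq_sym !(nbhd_neq e_irr).
have puQ : (p, u) \in nonadj x by rewrite in_nonadj pNx uNx pu npu.
have pg1Q : (p, g1) \in nonadj x by rewrite in_nonadj pNx g1Nx pg1 npg1.
have pg2Q : (p, g2) \in nonadj x by rewrite in_nonadj pNx g2Nx pg2 npg2.
have zwQ : (z, w) \in nonadj x by rewrite in_nonadj exz exw zw nzw.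
set s := [:: (p, u); (u, p); (p, g1); (g1, p); (p, g2); (g2, p); (z, w); (w, z)].
have /card_uniqP/= <- : uniq s by rewrite /s; decide_by_neqs.
apply/subset_leq_card/subsetP/allP.
by rewrite /s /= (nonadjC e_sym x u) (nonadjC e_sym x g1) (nonadjC e_sym x g2)
  (nonadjC e_sym x w) puQ pg1Q pg2Q zwQ.
Qed.

Lemma frame_ntri_le11 : ntri x <= 11.
Proof.
have [|/deg_eq6 dx6] := leqP (ntri x) 10; first by move/leq_trans; apply.
have := ntri_nonadj e_sym e_irr x; have := frame_nonadj_ge8 dx6.
by rewrite dx6; lia.
Qed.

End Frame.

Lemma frame_ntri_matched u x y z w : frame u x y z w ->
  [/\ ntri x <= 11, ntri y <= 11, ntri z <= 11 & ntri w <= 11].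
Proof.
move=> F; have F' := frame_sym_pairs F.
by split; apply: frame_ntri_le11;
  [exact: F | exact: frame_sym_xy F | exact: F' | exact: frame_sym_xy F'].
Qed.

Definition extremal := [set v | ntri v == 13].

Lemma extremal_nbhd u : u \in extremal -> 4 <= #|N u :\: extremal|.
Proof.
rewrite inE => /eqP /frame_of_ntri13 [x [y [z [w F]]]].
have [_ uq _] := F; have [tx ty tz tw] := frame_ntri_matched F.
have [xN yN _ _] := frame_nonadj F; have [zN wN _ _] := frame_nonadj (frame_sym_pairs F).
rewrite -[4](card_uniqP uq); apply/subset_leq_card/subsetP => v.
rewrite !in_cons in_nil orbF in_setD inE => /or4P [] /eqP ->; rewrite ?xN ?yN ?zN ?wN andbT;
  [move: tx | move: ty | move: tz | move: tw]; lia.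
Qed.

Lemma frame_charge u x y z w : frame u x y z w -> 4 * ntri x + #|N x :&: extremal| <= 48.
Proof.
move=> F; have [tx _ tz tw] := frame_ntri_matched F; have [zNx wNx] := frame_cross_nbhd F.
have [_ _ zw _] := frame_nonadj (frame_sym_pairs F).
have /subset_leq_card : N x :&: extremal \subset N x :\ z :\ w.
  apply/subsetP => v; rewrite !inE => /andP [xv /eqP tv]; rewrite xv andbT.
  by apply/andP; split; apply/eqP => vE; [move: tw | move: tz]; rewrite -vE tv.
have := cardsD1 z (N x); have := cardsD1 w (N x :\ z); have := deg_le6 x.
by rewrite zNx in_setD1 wNx (eq_sym w z) zw; lia.
Qed.

Lemma nonextremal_charge v : v \notin extremal -> 4 * ntri v + #|N v :&: extremal| <= 48.
Proof.
move=> vA; have t12 : ntri v <= 12 by have := ntri_le13 v; move: vA; rewrite inE; lia.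
have [/set0Pn [u] | A0] := boolP (N v :&: extremal != set0); last first.
  by move: A0; rewrite negbK => /eqP ->; rewrite cards0; lia.
rewrite !inE => /andP [evu /eqP /frame_of_ntri13 [x [y [z [w F]]]]].
have vN : v \in N u by rewrite in_nbhd e_sym.
have [vxyzw | vxyzw] := boolP (v \in [:: x; y; z; w]); last first.
  by move: vA; rewrite inE (frame_ntri_other F vN vxyzw).
have F' := frame_sym_pairs F.
move: vxyzw; rewrite !in_cons in_nil orbF => /or4P [] /eqP ->; apply: frame_charge;
  [exact: F | exact: frame_sym_xy F | exact: F' | exact: frame_sym_xy F'].
Qed.

Lemma sum_charge_transfer :
  \sum_(v in ~: extremal) #|N v :&: extremal| = \sum_(v in extremal) #|N v :\: extremal|.
Proof.
rewrite sum_card_exchange [RHS]big_mkcond; apply: eq_bigr => w _.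
case: ifP; rewrite inE => wA; last first.
  by apply: eq_card0 => v; rewrite !inE wA !andbF.
by apply: eq_card => v; rewrite !inE wA e_sym andbT.
Qed.

Lemma k3_le_4card : k_t e 3 <= 4 * #|T|.
Proof.
have hA : \sum_(v in extremal) 4 * ntri v <= \sum_(v in extremal) (48 + #|N v :\: extremal|).
  apply: leq_sum => v vA; have := extremal_nbhd vA; move: vA; rewrite inE => /eqP ->; lia.
have hB : \sum_(v in ~: extremal) (4 * ntri v + #|N v :&: extremal|) <= \sum_(v in ~: extremal) 48.
  by apply: leq_sum => v; rewrite inE; apply: nonextremal_charge.
have hT : \sum_v 4 * ntri v = \sum_(v in extremal) 4 * ntri v + \sum_(v in ~: extremal) 4 * ntri v.
  by rewrite (bigID (mem extremal)) /=; congr (_ + _); apply: eq_bigl => v; rewrite !inE.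
rewrite [in X in _ <= X]big_split sum_nat_const /= in hA.
rewrite big_split sum_nat_const sum_charge_transfer /= in hB.
rewrite -big_distrr /= sum_ntri in hT.
have : #|extremal| + #|~: extremal| = #|T| := cardsC extremal.
lia.
Qed.

End MaxDegree6CliqueNumber5.

Lemma card_ord_count n (P : pred nat) : #|[set i : 'I_n | P i]| = count P (iota 0 n).
Proof.
by rewrite -sum1dep_card -(big_mkord P (fun=> 1)) /index_iota subn0 sum1_count.
Qed.

Lemma sum_ord_iota n (P : pred nat) (F : nat -> nat) :
  \sum_(i < n | P i) F i = \sum_(i <- iota 0 n | P i) F i.
Proof. by rewrite -(big_mkord P F) /index_iota subn0. Qed.

Lemma T84_sym : symmetric T84_rel.
Proof. by move=> x y; rewrite /T84_rel eq_sym. Qed.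

Lemma T84_irr : irreflexive T84_rel.
Proof. by move=> x; rewrite /T84_rel eqxx. Qed.

Lemma T84_deg x : #|nbhd T84_rel x| = 6.
Proof.
rewrite /nbhd /T84_rel (@card_ord_count 8 (fun i => x %/ 2 != i %/ 2)).
by case: x => -[|[|[|[|[|[|[|[|]]]]]]]].
Qed.

Lemma T84_codeg_sum m : m < 8 ->
  \sum_(a <- iota 0 8 | m %/ 2 != a %/ 2)
    count (fun i => (m %/ 2 != i %/ 2) && (a %/ 2 != i %/ 2)) (iota 0 8) = 24.
Proof. by rewrite unlock; case: m => [|[|[|[|[|[|[|[|m]]]]]]]]. Qed.

Lemma T84_ntri x : ntri T84_rel x = 12.
Proof.
have := double_ntri T84_sym T84_irr x.
rewrite (eq_bigr (fun a : 'I_8 =>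
  count (fun i => (x %/ 2 != i %/ 2) && (a %/ 2 != i %/ 2)) (iota 0 8))); last first.
  by move=> a _; rewrite -card_ord_count; apply: eq_card => i; rewrite !inE.
rewrite (eq_bigl (fun a : 'I_8 => x %/ 2 != a %/ 2)); last by move=> a; rewrite inE.
rewrite (@sum_ord_iota 8 (fun a => x %/ 2 != a %/ 2)
  (fun a => count (fun i => (x %/ 2 != i %/ 2) && (a %/ 2 != i %/ 2)) (iota 0 8))).
by rewrite T84_codeg_sum //; lia.
Qed.

Lemma T84_k3 : k_t T84_rel 3 = 32.
Proof.
have := sum_ntri T84_rel; rewrite (eq_bigr (fun=> 12)) => [|u _]; last exact: T84_ntri.
by rewrite sum_nat_const card_ord; lia.
Qed.

Lemma T84_clique_le4 : clique_num_le T84_rel 4.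
Proof.
move=> S cS; pose part (y : 'I_8) : 'I_4 := inord (y %/ 2).
have part_inj : {in S &, injective part}.
  move=> y y' yS y'S /(congr1 (@nat_of_ord 4)); rewrite !inordK ?ltn_divLR //.
  move=> E; apply/eqP; apply: contraT => yy'.
  by move/cliqueP: cS => /(_ y y' yS y'S yy'); rewrite /T84_rel E eqxx.
by rewrite -(card_in_imset part_inj) (leq_trans (max_card _)) ?card_ord.
Qed.

Lemma T84_in_class : in_class T84_rel 6 5.
Proof.
split; first by split; [exact: T84_sym | exact: T84_irr].
split; first by move=> x; rewrite -[[set y | _]]/(nbhd T84_rel x) T84_deg.
by split; [move=> S /T84_clique_le4/leq_trans; apply | rewrite card_ord].
Qed.

Local Open Scope ring_scope.

Lemma rho3_le4 (T : finType) (e : rel T) : in_class e 6 5 -> rho_t e 3 <= 4%:R.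
Proof.
case=> -[e_sym e_irr] [deg_le6 [clique_le5 n_gt0]].
by rewrite /rho_t ler_pdivrMr ?ltr0n // -natrM ler_nat k3_le_4card.
Qed.

Lemma rho3_T84 : rho_t T84_rel 3 = 4%:R.
Proof. by rewrite /rho_t T84_k3 card_ord -[32%N]/(4 * 8)%N natrM mulfK. Qed.

Theorem mainTheorem20 :
  is_f_t 3 6 5 (4%:R)%R /\ rho_t T84_rel 3 = (4%:R)%R.
Proof.
split; last exact: rho3_T84.
split=> [T e | r rho_le]; first exact: rho3_le4.
by rewrite -rho3_T84; apply: rho_le; exact: T84_in_class.
Qed.
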